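(* Let $\Sigma$ be an alphabet and let $A$, $B$, $C$ be modules over $\Sigma$ with pairwise disjoint node sets. Then $(A \bullet B) \bullet C$ and $A \bullet (B \bullet C)$ are both defined and are isomorphic modules, i.e. $(A\bullet B)\bullet C = A\bullet(B\bullet C)$ up to renaming of nodes.
   Context: An alphabet $\Sigma$ is a finite set of labels. An interface over $\Sigma$ is a finite set $R$ in which every element carries a label from $\Sigma$ and a positive integer index, such that for each label $l$, if $R$ contains exactly $k$ elements labeled $l$, these carry the indices $1,\dots,k$. An element has a fixed label, but may carry different indices in different interfaces. A module $G$ over $\Sigma$ is a finite directed graph $(V,E)$ together with two interfaces over $\Sigma$, the left interface ${}^*G\subseteq V$ and the right interface $G^*\subseteq V$ (not necessarily disjoint). Two modules are isomorphic if there is a bijection between their node sets preserving edges, membership in the left and right interfaces, labels, and indices in each interface. Harmonic pairs: for disjoint interfaces $R,S$, elements $r\in R$, $s\in S$ form a harmonic pair $\{r,s\}$ (with label $l$ and index $n$) if both have label $l$, $r$ has index $n$ in $R$ and $s$ has index $n$ in $S$. Composition: let $A,B$ be modules with disjoint node sets. For each node $x$ of $A$ or $B$ put $x'=\{x,y\}$ if $\{x,y\}$ is a harmonic pair of $A^*$ and ${}^*B$, and $x'=x$ otherwise. For a label $l$ let $m_l$ be the number of $l$-labeled harmonic pairs of $A^*$ and ${}^*B$. The module $A\bullet B$ has nodes all $x'$ ($x$ a node of $A$ or $B$) and edges all $(x',z')$ with $(x,z)$ an edge of $A$ or of $B$. Left interface ${}^*(A\bullet B)$: for each $x\in{}^*A$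 with label $l$ and index $n$ in ${}^*A$, $x'$ belongs to it with label $l$ and index $n$; for each $x\in{}^*B$ without harmonic partner in $A^*$, with label $l$ and index $n$ in ${}^*B$, $x$ belongs to it with index $p+n-m_l$, where $p$ is the number of $l$-labeled elements of ${}^*A$. Right interface $(A\bullet B)^*$: for each $x\in B^*$ with label $l$ and index $n$ in $B^*$, $x'$ belongs to it with label $l$ and index $n$; for each $x\in A^*$ without harmonic partner in ${}^*B$, with label $l$ and index $n$ in $A^*$, $x$ belongs to it with index $q+n-m_l$, where $q$ is the number of $l$-labeled elements of $B^*$. *)

From HB Require Import structures.
From mathcomp Require Import all_boot.
Set Implicit Arguments.
Unset Strict Implicit.
Unset Printing Implicit Defensive.

(* A (pre)module over an alphabet Sig: a finite directed graph (node, edge),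
   a label function (only meaningful on interface elements), and two
   interfaces: the left one (inL, with indices idxL) and the right one
   (inR, with indices idxR). *)
Record premodule (Sig : finType) := Premodule {
  node : finType;
  edge : rel node;
  lab : node -> Sig;
  inL : {set node};
  idxL : node -> nat;
  inR : {set node};
  idxR : node -> nat }.
Arguments node {Sig} p.
Arguments edge {Sig} p _ _.
Arguments lab {Sig} p _.
Arguments inL {Sig} p.
Arguments idxL {Sig} p _.
Arguments inR {Sig} p.
Arguments idxR {Sig} p _.

Definition interface_ok (Sig : finType) (V : finType) (lb : V -> Sig)
    (S : {set V}) (idx : V -> nat) : Prop :=
  forall l : Sig,
    {in [set x in S | lb x == l] &, injective idx} /\
    (forall x, x \in S -> lb x = l -> 1 <= idx x <= #|[set y in S | lb y == l]|).

Definition is_module (Sig : finType) (M : premodule Sig) : Prop :=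
  interface_ok (lab M) (inL M) (idxL M) /\
  interface_ok (lab M) (inR M) (idxR M).

Section Composition.
Variables (Sig : finType) (A B : premodule Sig).

(* {a, b} is a harmonic pair of A^* and *B *)
Definition harmonic (a : node A) (b : node B) : bool :=
  [&& a \in inR A, b \in inL B, lab A a == lab B b & idxR A a == idxL B b].

Definition unpairedB (b : node B) : bool := [pick a | harmonic a b] == None.
Definition unpairedA (a : node A) : bool := [pick b | harmonic a b] == None.

(* Node set of A \bullet B: the node {a,b} of a harmonic pair is represented
   by (inl a); the other nodes x are represented by themselves. *)
Definition compV : finType := (node A + {b : node B | unpairedB b})%type.

Definition primeA (a : node A) : compV := inl a.
Definition primeB (b : node B) : compV :=
  (match [pick a | harmonic a b] as o
     return [pick a | harmonic a b] = o -> compV with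
   | Some a => fun _ => inl a
   | None => fun e => inr (exist (fun b => unpairedB b) b (introT eqP e))
   end) (erefl _).

Definition comp_edge : rel compV := fun u v =>
  [exists a1, exists a2, [&& primeA a1 == u, primeA a2 == v & edge A a1 a2]] ||
  [exists b1, exists b2, [&& primeB b1 == u, primeB b2 == v & edge B b1 b2]].

Definition comp_lab (u : compV) : Sig :=
  match u with inl a => lab A a | inr b => lab B (val b) end.

Definition mcount (l : Sig) : nat :=
  #|[set ab : node A * node B | harmonic ab.1 ab.2 && (lab A ab.1 == l)]|.
Definition pcount (l : Sig) : nat := #|[set a in inL A | lab A a == l]|.
Definition qcount (l : Sig) : nat := #|[set b in inR B | lab B b == l]|.

Definition comp_inL : {set compV} :=
  [set u | match u with inl a => a \in inL A | inr b => val b \in inL B end].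

Definition comp_idxL (u : compV) : nat :=
  match u with
  | inl a => idxL A a
  | inr b => let l := lab B (val b) in (pcount l + idxL B (val b) - mcount l)%N
  end.

Definition comp_inR : {set compV} :=
  [set u | [exists b, (b \in inR B) && (primeB b == u)] ||
           [exists a, [&& a \in inR A, unpairedA a & primeA a == u]]].

Definition comp_idxR (u : compV) : nat :=
  match [pick b | (b \in inR B) && (primeB b == u)] with
  | Some b => idxR B b
  | None =>
      match u with
      | inl a => let l := lab A a in (qcount l + idxR A a - mcount l)%N
      | inr _ => 0
      end
  end.

Definition compose : premodule Sig :=
  @Premodule Sig compV comp_edge comp_lab comp_inL comp_idxL comp_inR comp_idxR.

End Composition.

Notation "A \bullet B" := (compose A B) (at level 40, left associativity).

Definition module_iso (Sig : finType) (M N : premodule Sig) : Prop :=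
  exists f : node M -> node N,
    bijective f /\
    (forall x y, edge N (f x) (f y) = edge M x y) /\
    (forall x, (f x \in inL N) = (x \in inL M)) /\
    (forall x, (f x \in inR N) = (x \in inR M)) /\
    (forall x, x \in inL M -> lab N (f x) = lab M x /\ idxL N (f x) = idxL M x) /\
    (forall x, x \in inR M -> lab N (f x) = lab M x /\ idxR N (f x) = idxR M x).

From HB Require Import structures.
From mathcomp Require Import all_boot zify.
Set Implicit Arguments. Unset Strict Implicit. Unset Printing Implicit Defensive.

(* Both (A • B) • C and A • (B • C) are quotients of the disjoint union A + B + C,
   a node of X • Y being a node of X or of Y with the two members of each harmonic
   pair identified.  Counting harmonic pairs gives m_l = min (q_l(A), p_l(B)), so an
   unpaired element of A^* enters (A • B)^* with its index shifted by q_l(B) - p_l(B),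
   and an unpaired element of *C enters *(B • C) with its index shifted by
   p_l(B) - q_l(B).  Hence "a in A^* and c in *C become harmonic once B is glued in"
   means the same on both sides, and the two quotients identify exactly the same
   nodes: harmonic pairs of A^*/*B, of B^*/*C, and these A-C pairs.  The induced
   bijection preserves edges, which are images of the edges of A, B and C, and
   interfaces: the left interface of both sides is represented by *A, then by the
   elements of *B not glued to A, then by those of *C not glued to A or B (dually on
   the right), and the indices agree by the same arithmetic. *)

Lemma eq_sym_iff (T : Type) (x y : T) (P : Prop) : x = y <-> P -> y = x <-> P.
Proof. by move=> xyP; split=> [/esym/xyP|/xyP/esym]. Qed.

Definition rel_image (S U : Type) (i : S -> U) (e : rel S) (u v : U) : Prop :=
  exists x y, [/\ i x = u, i y = v & e x y].

(* The shape of the interfaces of a composite: *(X • Y) consists of the primes of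
   *X and of the primes of those elements of *Y not glued to a node of X. *)
Definition prior_image (S T U : Type) (i : S -> U) (P : S -> Prop)
    (j : T -> U) (Q : T -> Prop) (u : U) : Prop :=
  (exists x, i x = u /\ P x) \/ (exists y, [/\ j y = u, Q y & forall x, i x <> u]).

Definition prior_image3 (S T W U : Type) (i : S -> U) (P : S -> Prop)
    (j : T -> U) (Q : T -> Prop) (k : W -> U) (R : W -> Prop) (u : U) : Prop :=
  [\/ exists x, i x = u /\ P x,
      exists y, [/\ j y = u, Q y & forall x, i x <> u] |
      exists z, [/\ k z = u, R z, forall x, i x <> u & forall y, j y <> u]].

Lemma prior_image_nestl (S T V W U : Type) (i : S -> W) (P : S -> Prop)
    (j : T -> W) (Q : T -> Prop) (n : W -> U) (PQ : W -> Prop) {k : V -> U} {R : V -> Prop} :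
  injective n -> (forall w, (exists x, i x = w) \/ (exists y, j y = w)) ->
  (forall w, PQ w <-> prior_image i P j Q w) ->
  forall u, prior_image n PQ k R u <-> prior_image3 (n \o i) P (n \o j) Q k R u.
Proof.
move=> n_inj ij_cover PQE u; split.
  case=> [[w [<- /PQE[[x [<- Px]]|[y [<- Qy no_x]]]]]|[z [<- Rz no_w]]].
  - by constructor 1; exists x.
  - by constructor 2; exists y; split=> // x /n_inj; apply: no_x.
  - by constructor 3; exists z; split=> // [x|y]; apply: no_w.
case=> [[x [<- Px]]|[y [<- Qy no_x]]|[z [<- Rz no_x no_y]]].
- by left; exists (i x); split=> //; apply/PQE; left; exists x.
- left; exists (j y); split=> //; apply/PQE; right; exists y; split=> // x ij.
  by apply: (no_x x) => /=; rewrite ij.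
- right; exists z; split=> // w.
  by case: (ij_cover w) => [[x <-]|[y <-]]; [apply: no_x|apply: no_y].
Qed.

Lemma prior_image_nestr (S T V W U : Type) {k : V -> U} {R : V -> Prop}
    (n : W -> U) (PQ : W -> Prop) (i : S -> W) (P : S -> Prop) (j : T -> W) (Q : T -> Prop) :
  injective n -> (forall w, PQ w <-> prior_image i P j Q w) ->
  forall u, prior_image k R n PQ u <-> prior_image3 k R (n \o i) P (n \o j) Q u.
Proof.
move=> n_inj PQE u; split.
  case=> [[z [<- Rz]]|[w [<- /PQE[[x [<- Px]]|[y [<- Qy no_x]]] no_z]]].
  - by constructor 1; exists z.
  - by constructor 2; exists x.
  - by constructor 3; exists y; split=> // x /n_inj; apply: no_x.
case=> [[z [<- Rz]]|[x [<- Px no_z]]|[y [<- Qy no_z no_x]]].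
- by left; exists z.
- by right; exists (i x); split=> //; apply/PQE; left; exists x.
- right; exists (j y); split=> //; apply/PQE; right; exists y; split=> // x ij.
  by apply: (no_x x) => /=; rewrite ij.
Qed.

Section SameKernel.
Variables (T U V : Type) (p : T -> U) (q : T -> V) (sp : U -> T) (sq : V -> T).
Hypotheses (spK : cancel sp p) (sqK : cancel sq q).
Hypothesis same_kernel : forall s t, p s = p t <-> q s = q t.

Lemma same_kernel_bij : bijective (q \o sp).
Proof.
exists (p \o sq) => [u|v] /=.
  by rewrite -[RHS]spK; apply/same_kernel; rewrite sqK.
by rewrite -[RHS]sqK; apply/same_kernel; rewrite spK.
Qed.

Lemma same_kernel_fiber t u : p t = u <-> q t = q (sp u).
Proof. by rewrite -{1}[u]spK; apply: same_kernel. Qed.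

Lemma same_kernel_rel_image (e : rel T) u v :
  rel_image p e u v <-> rel_image q e (q (sp u)) (q (sp v)).
Proof.
by split=> -[s [t [su tv st]]]; exists s, t; split=> //; apply/same_kernel_fiber.
Qed.

Lemma same_kernel_prior_image3 (S' T' W' : Type) (i : S' -> T) (P : S' -> Prop)
    (j : T' -> T) (Q : T' -> Prop) (k : W' -> T) (R : W' -> Prop) u :
  prior_image3 (p \o i) P (p \o j) Q (p \o k) R u <->
  prior_image3 (q \o i) P (q \o j) Q (q \o k) R (q (sp u)).
Proof.
have fib := same_kernel_fiber.
split; (case=> [[x [/fib ? ?]]|[y [/fib ? ? no_x]]|[z [/fib ? ? no_x no_y]]];
  [ by constructor 1; exists x
  | by constructor 2; exists y; split=> // x /fib; apply: no_x
  | by constructor 3; exists z; split=> // [x|y] /fib; [apply: no_x|apply: no_y]]).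
Qed.
End SameKernel.

Lemma card_index_onto (V : finType) (S : {set V}) (idx : V -> nat) (N : nat) :
  {in S &, injective idx} -> (forall u, u \in S -> 1 <= idx u <= N) ->
  (forall n, 1 <= n <= N -> exists2 u, u \in S & idx u = n) -> #|S| = N.
Proof.
move=> idx_inj idx_range idx_onto.
have idx_uniq : uniq (map idx (enum S)).
  by rewrite map_inj_in_uniq ?enum_uniq // => x y; rewrite !mem_enum; apply: idx_inj.
have idx_iota : map idx (enum S) =i iota 1 N.
  move=> n; rewrite mem_iota; apply/mapP/idP.
    by case=> x; rewrite mem_enum => /idx_range ? ->; lia.
  move=> n_range; have [|u uS <-] := idx_onto n; first lia.
  by exists u; rewrite ?mem_enum.
have := perm_size (uniq_perm idx_uniq (iota_uniq 1 N) idx_iota).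
by rewrite size_map size_iota -cardE.
Qed.

Section Interface.
Variables (Sig V : finType) (lb : V -> Sig) (S : {set V}) (idx : V -> nat).

Lemma interface_index_onto l n : interface_ok lb S idx ->
  1 <= n <= #|[set y in S | lb y == l]| -> exists x, [/\ x \in S, lb x = l & idx x = n].
Proof.
move=> /(_ l) [idx_inj idx_range] n_range.
set Sl := [set y in S | lb y == l] in idx_inj n_range.
have idx_uniq : uniq (map idx (enum Sl)).
  by rewrite map_inj_in_uniq ?enum_uniq // => x y; rewrite !mem_enum; apply: idx_inj.
have idx_sub : {subset map idx (enum Sl) <= iota 1 #|Sl|}.
  move=> k /mapP [x]; rewrite mem_enum inE => /andP [xS /eqP xl] ->.
  by rewrite mem_iota; have := idx_range x xS xl; rewrite -/Sl; lia.
have [|_ idx_iota] := uniq_min_size idx_uniq idx_sub.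
  by rewrite size_iota size_map -cardE.
have : n \in iota 1 #|Sl| by rewrite mem_iota; lia.
by rewrite -idx_iota => /mapP [x]; rewrite mem_enum inE => /andP [xS /eqP xl] ->; exists x.
Qed.

Lemma interface_ok_of_index_onto (N : Sig -> nat) :
  (forall x y, x \in S -> y \in S -> lb x = lb y -> idx x = idx y -> x = y) ->
  (forall x, x \in S -> 1 <= idx x <= N (lb x)) ->
  (forall l n, 1 <= n <= N l -> exists x, [/\ x \in S, lb x = l & idx x = n]) ->
  interface_ok lb S idx /\ forall l, #|[set x in S | lb x == l]| = N l.
Proof.
move=> idx_inj idx_range idx_onto.
have card_class l : #|[set x in S | lb x == l]| = N l.
  apply: card_index_onto => [x y||n /idx_onto [x [xS xl <-]]].
  - by rewrite !inE => /andP[xS /eqP xl] /andP[yS /eqP yl]; apply: idx_inj; rewrite ?xl ?yl.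
  - by move=> x; rewrite inE => /andP[/idx_range + /eqP <-].
  by exists x; rewrite // inE xS xl eqxx.
split=> // l; split=> [x y|x xS xl].
  by rewrite !inE => /andP[xS /eqP xl] /andP[yS /eqP yl]; apply: idx_inj; rewrite ?xl ?yl.
by rewrite card_class -xl; apply: idx_range.
Qed.

End Interface.

Section ModuleInterfaces.
Variables (Sig : finType) (M : premodule Sig).
Hypothesis M_module : is_module M.

Lemma idxL_range x : x \in inL M -> 1 <= idxL M x <= pcount M (lab M x).
Proof. by move=> xL; have [_ ] := M_module.1 (lab M x); apply. Qed.

Lemma idxR_range x : x \in inR M -> 1 <= idxR M x <= qcount M (lab M x).
Proof. by move=> xR; have [_ ] := M_module.2 (lab M x); apply. Qed.

Lemma idxL_inj x x' : x \in inL M -> x' \in inL M ->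
  lab M x = lab M x' -> idxL M x = idxL M x' -> x = x'.
Proof.
move=> xL x'L lx; have [idx_inj _] := M_module.1 (lab M x).
by apply: idx_inj; rewrite inE ?xL ?x'L ?lx eqxx.
Qed.

Lemma idxR_inj x x' : x \in inR M -> x' \in inR M ->
  lab M x = lab M x' -> idxR M x = idxR M x' -> x = x'.
Proof.
move=> xR x'R lx; have [idx_inj _] := M_module.2 (lab M x).
by apply: idx_inj; rewrite inE ?xR ?x'R ?lx eqxx.
Qed.

Lemma idxL_onto l n : 1 <= n <= pcount M l ->
  exists x, [/\ x \in inL M, lab M x = l & idxL M x = n].
Proof. exact: interface_index_onto M_module.1. Qed.

Lemma idxR_onto l n : 1 <= n <= qcount M l ->
  exists x, [/\ x \in inR M, lab M x = l & idxR M x = n].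
Proof. exact: interface_index_onto M_module.2. Qed.

End ModuleInterfaces.

Section Composition.
Context {Sig : finType} {X Y : premodule Sig}.
Hypotheses (X_module : is_module X) (Y_module : is_module Y).

Lemma harmonic_inj_l (x x' : node X) (y : node Y) :
  harmonic x y -> harmonic x' y -> x = x'.
Proof.
case/and4P=> xR _ /eqP xl /eqP xi /and4P[x'R _ /eqP x'l /eqP x'i].
by apply: (idxR_inj X_module) => //; rewrite ?xl ?x'l ?xi ?x'i.
Qed.

Lemma harmonic_inj_r (x : node X) (y y' : node Y) :
  harmonic x y -> harmonic x y' -> y = y'.
Proof.
case/and4P=> _ yL /eqP xl /eqP xi /and4P[_ y'L /eqP xl' /eqP xi'].
by apply: (idxL_inj Y_module) => //; rewrite -?xl -?xl' -?xi -?xi'.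
Qed.

Lemma unpairedBP (y : node Y) : reflect (forall x : node X, ~~ harmonic x y) (unpairedB X y).
Proof.
rewrite /unpairedB; case: pickP => [x xy|no_x]; constructor; last by move=> x; rewrite no_x.
by move/(_ x); rewrite xy.
Qed.

Lemma unpairedAP (x : node X) : reflect (forall y : node Y, ~~ harmonic x y) (unpairedA Y x).
Proof.
rewrite /unpairedA; case: pickP => [y xy|no_y]; constructor; last by move=> y; rewrite no_y.
by move/(_ y); rewrite xy.
Qed.

Lemma primeB_unpaired (y : node Y) (y_unp : unpairedB X y) :
  primeB X y = inr (exist _ y y_unp).
Proof.
rewrite /primeB; move: (erefl _).
case: {2 3}[pick x | harmonic x y] / pickP => [x xy|no_x] e.
  by have := y_unp; rewrite /unpairedB e.
by congr inr; apply: val_inj.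
Qed.

Lemma primeB_paired (x : node X) (y : node Y) : harmonic x y -> primeB X y = primeA Y x.
Proof.
move=> xy; rewrite /primeB; move: (erefl _).
case: {2 3}[pick x | harmonic x y] / pickP => [x' x'y|no_x] e.
  by rewrite (harmonic_inj_l xy x'y).
by have := no_x x; rewrite xy.
Qed.

Lemma compP (u : node (X \bullet Y)) :
  (exists x, u = primeA Y x) \/ (exists2 y, u = primeB X y & unpairedB X y).
Proof.
case: u => [x|[y y_unp]]; first by left; exists x.
by right; exists y; rewrite ?primeB_unpaired.
Qed.

Lemma primeA_inj : injective (@primeA _ X Y).
Proof. by move=> x x' []. Qed.

Lemma paired_partnerB (y : node Y) : ~~ unpairedB X y -> exists x : node X, harmonic x y.
Proof. by rewrite /unpairedB; case: pickP => // x xy _; exists x. Qed.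

Lemma paired_partnerA (x : node X) : ~~ unpairedA Y x -> exists y : node Y, harmonic x y.
Proof. by rewrite /unpairedA; case: pickP => // y xy _; exists y. Qed.

Lemma primeA_eq_primeB (x : node X) (y : node Y) : primeA Y x = primeB X y <-> harmonic x y.
Proof.
split=> [|/primeB_paired/esym //].
have [y_unp|/paired_partnerB[x' x'y]] := boolP (unpairedB X y).
  by rewrite primeB_unpaired.
by rewrite (primeB_paired x'y) => /primeA_inj ->.
Qed.

Lemma primeB_inj : injective (@primeB _ X Y).
Proof.
move=> y y'.
have [y_unp|/paired_partnerB[x xy]] := boolP (unpairedB X y);
  have [y'_unp|/paired_partnerB[x' x'y']] := boolP (unpairedB X y').
- by rewrite (primeB_unpaired y_unp) (primeB_unpaired y'_unp) => -[].
- by rewrite (primeB_unpaired y_unp) (primeB_paired x'y').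
- by rewrite (primeB_unpaired y'_unp) (primeB_paired xy).
rewrite (primeB_paired xy) (primeB_paired x'y') => /primeA_inj x_eq; subst x'.
exact: harmonic_inj_r xy x'y'.
Qed.

Lemma unpairedB_prime (y : node Y) :
  reflect (forall x, primeA Y x <> primeB X y) (unpairedB X y).
Proof.
apply: (iffP (unpairedBP y)) => no_x x; first by move/primeA_eq_primeB; apply/negP.
by apply/negP => /primeA_eq_primeB; apply: no_x.
Qed.

Lemma unpairedA_prime (x : node X) :
  reflect (forall y, primeB X y <> primeA Y x) (unpairedA Y x).
Proof.
apply: (iffP (unpairedAP x)) => no_y y; first by move/esym/primeA_eq_primeB; apply/negP.
by apply/negP => /primeA_eq_primeB/esym; apply: no_y.
Qed.

Lemma comp_cover (u : node (X \bullet Y)) :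
  (exists x, primeA Y x = u) \/ (exists y, primeB X y = u).
Proof. by case: (compP u) => [[x ->]|[y -> _]]; [left; exists x|right; exists y]. Qed.

Lemma lab_primeA (x : node X) : lab (X \bullet Y) (primeA Y x) = lab X x.
Proof. by []. Qed.

Lemma lab_primeB (y : node Y) : lab (X \bullet Y) (primeB X y) = lab Y y.
Proof.
have [y_unp|/paired_partnerB[x xy]] := boolP (unpairedB X y); first by rewrite primeB_unpaired.
by rewrite (primeB_paired xy); case/and4P: xy => _ _ /eqP.
Qed.

Lemma unpairedB_idx (y : node Y) :
  y \in inL Y -> unpairedB X y = (qcount X (lab Y y) < idxL Y y).
Proof.
move=> yL; have y_range := idxL_range Y_module yL.
apply/unpairedBP/idP => [no_x|lt_q x].
  rewrite ltnNge; apply/negP => le_q.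
  have /(idxR_onto X_module)[x [xR xl xi]] : 1 <= idxL Y y <= qcount X (lab Y y) by lia.
  by have := no_x x; rewrite /harmonic xR yL xl xi !eqxx.
apply/negP => /and4P [xR _ /eqP xl /eqP xi].
by have := idxR_range X_module xR; rewrite xl xi; lia.
Qed.

Lemma unpairedA_idx (x : node X) :
  x \in inR X -> unpairedA Y x = (pcount Y (lab X x) < idxR X x).
Proof.
move=> xR; have x_range := idxR_range X_module xR.
apply/unpairedAP/idP => [no_y|lt_p y].
  rewrite ltnNge; apply/negP => le_p.
  have /(idxL_onto Y_module)[y [yL yl yi]] : 1 <= idxR X x <= pcount Y (lab X x) by lia.
  by have := no_y y; rewrite /harmonic xR yL yl yi !eqxx.
apply/negP => /and4P [_ yL /eqP yl /eqP yi].
by have := idxL_range Y_module yL; rewrite -yl -yi; lia.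
Qed.

Lemma mcount_min l : mcount X Y l = minn (qcount X l) (pcount Y l).
Proof.
apply: (@card_index_onto _ _ (fun xy : node X * node Y => idxR X xy.1)).
- move=> [x y] [x' y']; rewrite !inE /= => /andP[xy /eqP xl] /andP[x'y' /eqP x'l] xi.
  have x_eq : x = x'.
    case/and4P: xy => xR _ _ _; case/and4P: x'y' => x'R _ _ _.
    by apply: (idxR_inj X_module) => //; rewrite xl x'l.
  by subst x'; rewrite (harmonic_inj_r xy x'y').
- move=> [x y]; rewrite !inE /= => /andP[/and4P[xR yL /eqP xyl /eqP xyi] /eqP xl].
  by have := idxR_range X_module xR; have := idxL_range Y_module yL; rewrite -xyl xyi xl; lia.
- move=> n n_range.
  have /(idxR_onto X_module)[x [xR xl xi]] : 1 <= n <= qcount X l by lia.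
  have /(idxL_onto Y_module)[y [yL yl yi]] : 1 <= n <= pcount Y l by lia.
  by exists (x, y); rewrite // !inE /= /harmonic xR yL xl yl xi yi !eqxx.
Qed.

Lemma inL_primeA (x : node X) : (primeA Y x \in inL (X \bullet Y)) = (x \in inL X).
Proof. by rewrite inE. Qed.

Lemma inL_primeB (y : node Y) :
  unpairedB X y -> (primeB X y \in inL (X \bullet Y)) = (y \in inL Y).
Proof. by move=> y_unp; rewrite primeB_unpaired inE. Qed.

Lemma inR_primeB (y : node Y) : (primeB X y \in inR (X \bullet Y)) = (y \in inR Y).
Proof.
rewrite inE; apply/orP/idP => [[|]|yR].
- by case/existsP=> y' /andP[y'R /eqP/primeB_inj <-].
- case/existsP=> x /and3P[_ /unpairedAP no_y /eqP/primeA_eq_primeB xy].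
  by have := no_y y; rewrite xy.
by left; apply/existsP; exists y; rewrite yR eqxx.
Qed.

Lemma inR_primeA (x : node X) :
  unpairedA Y x -> (primeA Y x \in inR (X \bullet Y)) = (x \in inR X).
Proof.
move=> x_unp; rewrite inE; apply/orP/idP => [[|]|xR].
- case/existsP=> y /andP[_ /eqP/esym/primeA_eq_primeB xy].
  by move/unpairedAP: x_unp => /(_ y); rewrite xy.
- by case/existsP=> x' /and3P[x'R _ /eqP/primeA_inj <-].
by right; apply/existsP; exists x; rewrite xR x_unp eqxx.
Qed.

Lemma idxL_primeA (x : node X) : idxL (X \bullet Y) (primeA Y x) = idxL X x.
Proof. by []. Qed.

Lemma idxL_primeB (y : node Y) : unpairedB X y ->
  idxL (X \bullet Y) (primeB X y) = pcount X (lab Y y) + idxL Y y - mcount X Y (lab Y y).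
Proof. by move=> y_unp; rewrite primeB_unpaired. Qed.

Lemma idxR_primeB (y : node Y) : y \in inR Y -> idxR (X \bullet Y) (primeB X y) = idxR Y y.
Proof.
move=> yR; rewrite /= /comp_idxR; case: pickP => [y' /andP[_ /eqP/primeB_inj -> //]|no_y].
by have := no_y y; rewrite yR eqxx.
Qed.

Lemma idxR_primeA (x : node X) : unpairedA Y x ->
  idxR (X \bullet Y) (primeA Y x) = qcount Y (lab X x) + idxR X x - mcount X Y (lab X x).
Proof.
move=> /unpairedAP no_y; rewrite /= /comp_idxR.
case: pickP => [y /andP[_ /eqP/esym/primeA_eq_primeB xy]|//].
by have := no_y y; rewrite xy.
Qed.

Lemma inL_compE u : u \in inL (X \bullet Y) ->
  (exists2 x, u = primeA Y x & x \in inL X) \/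
  (exists y, [/\ u = primeB X y, y \in inL Y & unpairedB X y]).
Proof.
case: (compP u) => [[x ->]|[y -> y_unp]]; first by rewrite inL_primeA; left; exists x.
by rewrite inL_primeB // => yL; right; exists y.
Qed.

Lemma inR_compE u : u \in inR (X \bullet Y) ->
  (exists2 y, u = primeB X y & y \in inR Y) \/
  (exists x, [/\ u = primeA Y x, x \in inR X & unpairedA Y x]).
Proof.
case: (compP u) => [[x ->]|[y -> _]]; last by rewrite inR_primeB; left; exists y.
have [x_unp|/paired_partnerA[y xy]] := boolP (unpairedA Y x).
  by rewrite inR_primeA // => xR; right; exists x.
by rewrite -(primeB_paired xy) inR_primeB; left; exists y.
Qed.

Lemma comp_inL_spec : interface_ok (lab (X \bullet Y)) (inL (X \bullet Y)) (idxL (X \bullet Y)) /\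
  forall l, pcount (X \bullet Y) l = pcount X l + pcount Y l - mcount X Y l.
Proof.
apply: interface_ok_of_index_onto => [u v uL vL|u uL|l n n_range].
- case: (inL_compE uL) => [[x -> xL]|[y [-> yL y_unp]]];
    case: (inL_compE vL) => [[x' -> x'L]|[y' [-> y'L y'_unp]]];
    rewrite ?lab_primeA ?lab_primeB ?idxL_primeA ?idxL_primeB // => l_eq.
  + by move=> /(idxL_inj X_module xL x'L l_eq) ->.
  + move: y'_unp; rewrite unpairedB_idx // -l_eq.
    by have := idxL_range X_module xL; have := mcount_min (lab X x); lia.
  + move: y_unp; rewrite unpairedB_idx // l_eq.
    by have := idxL_range X_module x'L; have := mcount_min (lab X x'); lia.
  + move: y_unp y'_unp; rewrite !unpairedB_idx // -l_eq.
    have := mcount_min (lab Y y) => m_min y_unp y'_unp idx_eq.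
    by rewrite (idxL_inj Y_module yL y'L l_eq) //; lia.
- case: (inL_compE uL) => [[x -> xL]|[y [-> yL y_unp]]].
    rewrite lab_primeA idxL_primeA.
    by have := idxL_range X_module xL; have := mcount_min (lab X x); lia.
  move: (y_unp); rewrite unpairedB_idx // lab_primeB idxL_primeB //.
  by have := idxL_range Y_module yL; have := mcount_min (lab Y y); lia.
have m_min := mcount_min l.
have [n_le|n_gt] := leqP n (pcount X l).
  have /(idxL_onto X_module)[x [xL xl xi]] : 1 <= n <= pcount X l by lia.
  by exists (primeA Y x); rewrite inL_primeA lab_primeA.
have /(idxL_onto Y_module)[y [yL yl yi]] :
  1 <= n - pcount X l + qcount X l <= pcount Y l by lia.
have y_unp : unpairedB X y by rewrite unpairedB_idx // yl yi; lia.
exists (primeB X y); rewrite inL_primeB // lab_primeB idxL_primeB // yl yi; split=> //; lia.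
Qed.

Lemma comp_inR_spec : interface_ok (lab (X \bullet Y)) (inR (X \bullet Y)) (idxR (X \bullet Y)) /\
  forall l, qcount (X \bullet Y) l = qcount Y l + qcount X l - mcount X Y l.
Proof.
apply: interface_ok_of_index_onto => [u v uR vR|u uR|l n n_range].
- case: (inR_compE uR) => [[y -> yR]|[x [-> xR x_unp]]];
    case: (inR_compE vR) => [[y' -> y'R]|[x' [-> x'R x'_unp]]];
    rewrite ?lab_primeA ?lab_primeB ?idxR_primeB ?idxR_primeA // => l_eq.
  + by move=> /(idxR_inj Y_module yR y'R l_eq) ->.
  + move: x'_unp; rewrite unpairedA_idx // -l_eq.
    by have := idxR_range Y_module yR; have := mcount_min (lab Y y); lia.
  + move: x_unp; rewrite unpairedA_idx // l_eq.
    by have := idxR_range Y_module y'R; have := mcount_min (lab Y y'); lia.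
  + move: x_unp x'_unp; rewrite !unpairedA_idx // -l_eq.
    have := mcount_min (lab X x) => m_min x_unp x'_unp idx_eq.
    by rewrite (idxR_inj X_module xR x'R l_eq) //; lia.
- case: (inR_compE uR) => [[y -> yR]|[x [-> xR x_unp]]].
    rewrite lab_primeB idxR_primeB //.
    by have := idxR_range Y_module yR; have := mcount_min (lab Y y); lia.
  move: (x_unp); rewrite unpairedA_idx // lab_primeA idxR_primeA //.
  by have := idxR_range X_module xR; have := mcount_min (lab X x); lia.
have m_min := mcount_min l.
have [n_le|n_gt] := leqP n (qcount Y l).
  have /(idxR_onto Y_module)[y [yR yl yi]] : 1 <= n <= qcount Y l by lia.
  by exists (primeB X y); rewrite inR_primeB lab_primeB idxR_primeB.
have /(idxR_onto X_module)[x [xR xl xi]] :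
  1 <= n - qcount Y l + pcount Y l <= qcount X l by lia.
have x_unp : unpairedA Y x by rewrite unpairedA_idx // xl xi; lia.
exists (primeA Y x); rewrite inR_primeA // lab_primeA idxR_primeA // xl xi; split=> //; lia.
Qed.

Lemma comp_module : is_module (X \bullet Y).
Proof. exact: conj comp_inL_spec.1 comp_inR_spec.1. Qed.

Lemma pcount_comp l : pcount (X \bullet Y) l = pcount X l + pcount Y l - mcount X Y l.
Proof. exact: comp_inL_spec.2. Qed.

Lemma qcount_comp l : qcount (X \bullet Y) l = qcount Y l + qcount X l - mcount X Y l.
Proof. exact: comp_inR_spec.2. Qed.

Lemma inL_comp u : u \in inL (X \bullet Y) <->
  prior_image (@primeA _ X Y) (fun x => x \in inL X) (@primeB _ X Y) (fun y => y \in inL Y) u.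
Proof.
split=> [/inL_compE[[x -> xL]|[y [-> yL /unpairedB_prime no_x]]]|].
- by left; exists x.
- by right; exists y.
case=> [[x [<- xL]]|[y [<- yL /unpairedB_prime y_unp]]]; first by rewrite inL_primeA.
by rewrite inL_primeB.
Qed.

Lemma inR_comp u : u \in inR (X \bullet Y) <->
  prior_image (@primeB _ X Y) (fun y => y \in inR Y) (@primeA _ X Y) (fun x => x \in inR X) u.
Proof.
split=> [/inR_compE[[y -> yR]|[x [-> xR /unpairedA_prime no_y]]]|].
- by left; exists y.
- by right; exists x.
case=> [[y [<- yR]]|[x [<- xR /unpairedA_prime x_unp]]]; first by rewrite inR_primeB.
by rewrite inR_primeA.
Qed.

Lemma edge_comp u v : edge (X \bullet Y) u v <->
  rel_image (@primeA _ X Y) (edge X) u v \/ rel_image (@primeB _ X Y) (edge Y) u v.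
Proof.
rewrite /= /comp_edge; split.
  by case/orP=> /existsP[x1 /existsP[x2 /and3P[/eqP e1 /eqP e2 E]]]; [left|right]; exists x1, x2.
case=> -[x1 [x2 [e1 e2 E]]]; apply/orP; [left|right];
  by apply/existsP; exists x1; apply/existsP; exists x2; rewrite E e1 e2 !eqxx.
Qed.

End Composition.

Section Associativity.
Variables (Sig : finType) (A B C : premodule Sig).
Hypotheses (A_module : is_module A) (B_module : is_module B) (C_module : is_module C).
Let AB_module := comp_module A_module B_module.
Let BC_module := comp_module B_module C_module.

Lemma harmonic_primeA_r (a : node A) (b : node B) :
  harmonic (B := B \bullet C) a (primeA C b) = harmonic a b.
Proof. by rewrite /harmonic inL_primeA lab_primeA idxL_primeA. Qed.

Lemma harmonic_primeB_l (b : node B) (c : node C) :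
  harmonic (A := A \bullet B) (primeB A b) c = harmonic b c.
Proof.
rewrite /harmonic (inR_primeB A_module B_module) (lab_primeB A_module).
by case: (boolP (b \in inR B)) => // bR; rewrite idxR_primeB.
Qed.

(* If a or c has a harmonic partner in B, both sides say that a and c are glued to
   the same node of B; otherwise both say that their shifted indices agree. *)
Lemma harmonic_primeA_primeB (a : node A) (c : node C) :
  harmonic (A := A \bullet B) (primeA B a) c = harmonic (B := B \bullet C) a (primeB B c).
Proof.
apply/idP/idP => h.
  have [a_unp|/paired_partnerA[b ab]] := boolP (unpairedA B a); last first.
    have bc : harmonic b c by rewrite -harmonic_primeB_l (primeB_paired A_module ab).
    by rewrite (primeB_paired B_module bc) harmonic_primeA_r.
  case/and4P: h => aR cL /eqP l_eq /eqP i_eq.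
  rewrite inR_primeA // in aR; rewrite idxR_primeA // in i_eq; rewrite lab_primeA in l_eq.
  move: a_unp; rewrite unpairedA_idx // l_eq => a_gt.
  have := idxR_range A_module aR; have := idxL_range C_module cL.
  have := mcount_min A_module B_module (lab C c); have := mcount_min B_module C_module (lab C c).
  rewrite l_eq in i_eq * => m_BC m_AB c_range a_range.
  have c_unp : unpairedB B c by rewrite unpairedB_idx //; lia.
  rewrite /harmonic aR inL_primeB // cL lab_primeB // l_eq eqxx idxL_primeB //=.
  by apply/eqP; lia.
have [c_unp|/paired_partnerB[b bc]] := boolP (unpairedB B c); last first.
  have ab : harmonic a b by rewrite -harmonic_primeA_r -(primeB_paired B_module bc).
  by rewrite -(primeB_paired A_module ab) harmonic_primeB_l.
case/and4P: h => aR cL /eqP l_eq /eqP i_eq.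
rewrite inL_primeB // in cL; rewrite idxL_primeB // in i_eq; rewrite lab_primeB // in l_eq.
move: c_unp; rewrite unpairedB_idx // -l_eq => c_gt.
have := idxR_range A_module aR; have := idxL_range C_module cL.
have := mcount_min A_module B_module (lab A a); have := mcount_min B_module C_module (lab A a).
rewrite -l_eq in i_eq * => m_BC m_AB c_range a_range.
have a_unp : unpairedA B a by rewrite unpairedA_idx //; lia.
rewrite /harmonic inR_primeA // aR cL lab_primeA l_eq eqxx idxR_primeA //=.
by apply/eqP; lia.
Qed.

Local Notation T3 := ((node A + node B) + node C)%type.
Local Notation L3 := ((A \bullet B) \bullet C).
Local Notation R3 := (A \bullet (B \bullet C)).
Local Notation primeAB := (@primeA _ (A \bullet B) C).
Local Notation primeBC := (@primeB _ A (B \bullet C)).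

Definition assocL (t : T3) : node L3 :=
  match t with
  | inl (inl a) => primeAB (primeA B a)
  | inl (inr b) => primeAB (primeB A b)
  | inr c => primeB (A \bullet B) c
  end.

Definition assocR (t : T3) : node R3 :=
  match t with
  | inl (inl a) => primeA (B \bullet C) a
  | inl (inr b) => primeBC (primeA C b)
  | inr c => primeBC (primeB B c)
  end.

Definition reprL (u : node L3) : T3 :=
  match u with
  | inl (inl a) => inl (inl a)
  | inl (inr b) => inl (inr (val b))
  | inr c => inr (val c)
  end.

Definition reprR (u : node R3) : T3 :=
  match u with
  | inl a => inl (inl a)
  | inr w => match val w with inl b => inl (inr b) | inr c => inr (val c) end
  end.

Lemma reprLK : cancel reprL assocL.
Proof. by case=> [[a|[b b_unp]]|[c c_unp]] //=; rewrite primeB_unpaired. Qed.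

Lemma reprRK : cancel reprR assocR.
Proof.
case=> [a|[[b|[c c_unp]] w_unp]] //=; first by rewrite (primeB_unpaired w_unp).
by rewrite (primeB_unpaired c_unp) (primeB_unpaired w_unp).
Qed.

Definition linked (s t : T3) : Prop :=
  match s, t with
  | inl (inl a), inl (inl a') => a = a'
  | inl (inr b), inl (inr b') => b = b'
  | inr c, inr c' => c = c'
  | inl (inl a), inl (inr b) | inl (inr b), inl (inl a) => harmonic a b
  | inl (inr b), inr c | inr c, inl (inr b) => harmonic b c
  | inl (inl a), inr c | inr c, inl (inl a) => harmonic (A := A \bullet B) (primeA B a) c
  end.

Lemma assocL_eq s t : assocL s = assocL t <-> linked s t.
Proof.
have aa (a a' : node A) : primeAB (primeA B a) = primeAB (primeA B a') <-> a = a'.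
  by split=> [/primeA_inj/primeA_inj|->].
have bb (b b' : node B) : primeAB (primeB A b) = primeAB (primeB A b') <-> b = b'.
  by split=> [/primeA_inj/(primeB_inj A_module B_module)|->].
have cc (c c' : node C) : primeB (A \bullet B) c = primeB (A \bullet B) c' <-> c = c'.
  by split=> [/(primeB_inj AB_module C_module)|->].
have ab (a : node A) (b : node B) : primeAB (primeA B a) = primeAB (primeB A b) <-> harmonic a b.
  by rewrite -(primeA_eq_primeB A_module); split=> [/primeA_inj|->].
have ac (a : node A) (c : node C) :
    primeAB (primeA B a) = primeB (A \bullet B) c <-> harmonic (A := A \bullet B) (primeA B a) c.
  exact: (primeA_eq_primeB AB_module).
have bc (b : node B) (c : node C) : primeAB (primeB A b) = primeB (A \bullet B) c <-> harmonic b c.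
  by rewrite (primeA_eq_primeB AB_module) harmonic_primeB_l.
by case: s => [[a|b]|c]; case: t => [[a'|b']|c'];
  solve [exact: aa | exact: bb | exact: cc | exact: ab | exact: ac | exact: bc
        | exact: eq_sym_iff (ab _ _) | exact: eq_sym_iff (ac _ _) | exact: eq_sym_iff (bc _ _)].
Qed.

Lemma assocR_eq s t : assocR s = assocR t <-> linked s t.
Proof.
have aa (a a' : node A) : primeA (B \bullet C) a = primeA (B \bullet C) a' <-> a = a'.
  by split=> [/primeA_inj|->].
have bb (b b' : node B) : primeBC (primeA C b) = primeBC (primeA C b') <-> b = b'.
  by split=> [/(primeB_inj A_module BC_module)/primeA_inj|->].
have cc (c c' : node C) : primeBC (primeB B c) = primeBC (primeB B c') <-> c = c'.
  by split=> [/(primeB_inj A_module BC_module)/(primeB_inj B_module C_module)|->].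
have ab (a : node A) (b : node B) : primeA (B \bullet C) a = primeBC (primeA C b) <-> harmonic a b.
  by rewrite (primeA_eq_primeB A_module) harmonic_primeA_r.
have ac (a : node A) (c : node C) :
    primeA (B \bullet C) a = primeBC (primeB B c) <-> harmonic (A := A \bullet B) (primeA B a) c.
  by rewrite (primeA_eq_primeB A_module) harmonic_primeA_primeB.
have bc (b : node B) (c : node C) : primeBC (primeA C b) = primeBC (primeB B c) <-> harmonic b c.
  by rewrite -(primeA_eq_primeB B_module); split=> [/(primeB_inj A_module BC_module)|->].
by case: s => [[a|b]|c]; case: t => [[a'|b']|c'];
  solve [exact: aa | exact: bb | exact: cc | exact: ab | exact: ac | exact: bc
        | exact: eq_sym_iff (ab _ _) | exact: eq_sym_iff (ac _ _) | exact: eq_sym_iff (bc _ _)].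
Qed.

Lemma assoc_same_kernel s t : assocL s = assocL t <-> assocR s = assocR t.
Proof. exact: iff_trans (assocL_eq s t) (iff_sym (assocR_eq s t)). Qed.

Definition assoc_iso (u : node L3) : node R3 := assocR (reprL u).

Lemma assoc_iso_bij : bijective assoc_iso.
Proof. exact: same_kernel_bij reprLK reprRK assoc_same_kernel. Qed.

Lemma assoc_isoE t : assoc_iso (assocL t) = assocR t.
Proof. by apply/esym/(same_kernel_fiber reprLK assoc_same_kernel). Qed.

Definition edge3 : rel T3 := fun s t =>
  match s, t with
  | inl (inl a), inl (inl a') => edge A a a'
  | inl (inr b), inl (inr b') => edge B b b'
  | inr c, inr c' => edge C c c'
  | _, _ => false
  end.

Lemma edge_assocL u v : edge L3 u v <-> rel_image assocL edge3 u v.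
Proof.
split.
  case/edge_comp=> [[w1 [w2 [<- <- /edge_comp[]]]]|[c1 [c2 [<- <- e]]]].
  - by case=> a1 [a2 [<- <- e]]; exists (inl (inl a1)), (inl (inl a2)).
  - by case=> b1 [b2 [<- <- e]]; exists (inl (inr b1)), (inl (inr b2)).
  - by exists (inr c1), (inr c2).
case=> [[[a1|b1]|c1] [[[a2|b2]|c2] [<- <- e]]] //; apply/edge_comp.
- by left; exists (primeA B a1), (primeA B a2); split=> //; apply/edge_comp; left; exists a1, a2.
- by left; exists (primeB A b1), (primeB A b2); split=> //; apply/edge_comp; right; exists b1, b2.
- by right; exists c1, c2.
Qed.

Lemma edge_assocR u v : edge R3 u v <-> rel_image assocR edge3 u v.
Proof.
split.
  case/edge_comp=> [[a1 [a2 [<- <- e]]]|[w1 [w2 [<- <- /edge_comp[]]]]].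
  - by exists (inl (inl a1)), (inl (inl a2)).
  - by case=> b1 [b2 [<- <- e]]; exists (inl (inr b1)), (inl (inr b2)).
  - by case=> c1 [c2 [<- <- e]]; exists (inr c1), (inr c2).
case=> [[[a1|b1]|c1] [[[a2|b2]|c2] [<- <- e]]] //; apply/edge_comp.
- by left; exists a1, a2.
- by right; exists (primeA C b1), (primeA C b2); split=> //; apply/edge_comp; left; exists b1, b2.
- by right; exists (primeB B c1), (primeB B c2); split=> //; apply/edge_comp; right; exists c1, c2.
Qed.

Lemma edge_assoc_iso u v : edge R3 (assoc_iso u) (assoc_iso v) = edge L3 u v.
Proof.
by apply/idP/idP => [/edge_assocR/(same_kernel_rel_image reprLK assoc_same_kernel)/edge_assocL
                    |/edge_assocL/(same_kernel_rel_image reprLK assoc_same_kernel)/edge_assocR].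
Qed.

Local Notation inA := (fun a : node A => inl (inl a) : T3).
Local Notation inB := (fun b : node B => inl (inr b) : T3).
Local Notation inC := (fun c : node C => inr c : T3).

Lemma inL_assocL u : u \in inL L3 <->
  prior_image3 (assocL \o inA) (fun a => a \in inL A) (assocL \o inB) (fun b => b \in inL B)
    (assocL \o inC) (fun c => c \in inL C) u.
Proof.
rewrite (inL_comp AB_module).
exact: (prior_image_nestl (i := primeA B : node A -> node (A \bullet B)) (j := @primeB _ A B)
          (@primeA_inj _ _ _) (@comp_cover _ _ _) (inL_comp A_module)).
Qed.

Lemma inL_assocR u : u \in inL R3 <->
  prior_image3 (assocR \o inA) (fun a => a \in inL A) (assocR \o inB) (fun b => b \in inL B)
    (assocR \o inC) (fun c => c \in inL C) u.
Proof.
rewrite (inL_comp A_module).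
exact: (prior_image_nestr (i := primeA C : node B -> node (B \bullet C)) (j := @primeB _ B C)
          (@primeB_inj _ _ _ A_module BC_module) (inL_comp B_module)).
Qed.

Lemma inR_assocL u : u \in inR L3 <->
  prior_image3 (assocL \o inC) (fun c => c \in inR C) (assocL \o inB) (fun b => b \in inR B)
    (assocL \o inA) (fun a => a \in inR A) u.
Proof.
rewrite (inR_comp AB_module C_module).
exact: (prior_image_nestr (i := @primeB _ A B : node B -> node (A \bullet B)) (j := primeA B)
          (@primeA_inj _ _ _) (inR_comp A_module B_module)).
Qed.

Lemma inR_assocR u : u \in inR R3 <->
  prior_image3 (assocR \o inC) (fun c => c \in inR C) (assocR \o inB) (fun b => b \in inR B)
    (assocR \o inA) (fun a => a \in inR A) u.
Proof.
have BC_cover (w : node (B \bullet C)) : (exists c, primeB B c = w) \/ (exists b, primeA C b = w).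
  by case: (comp_cover w) => [[b <-]|[c <-]]; [right; exists b|left; exists c].
rewrite (inR_comp A_module BC_module).
exact: (prior_image_nestl (i := @primeB _ B C : node C -> node (B \bullet C)) (j := primeA C)
          (@primeB_inj _ _ _ A_module BC_module) BC_cover (inR_comp B_module C_module)).
Qed.

Let assoc_prior_image3 := same_kernel_prior_image3 reprLK assoc_same_kernel.

Lemma inL_assoc_iso u : (assoc_iso u \in inL R3) = (u \in inL L3).
Proof.
by apply/idP/idP => [/inL_assocR/assoc_prior_image3/inL_assocL
                    |/inL_assocL/assoc_prior_image3/inL_assocR].
Qed.

Lemma inR_assoc_iso u : (assoc_iso u \in inR R3) = (u \in inR L3).
Proof.
by apply/idP/idP => [/inR_assocR/assoc_prior_image3/inR_assocL
                    |/inR_assocL/assoc_prior_image3/inR_assocR].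
Qed.

Lemma lab_assoc t : lab R3 (assocR t) = lab L3 (assocL t).
Proof.
case: t => [[a|b]|c]; rewrite /assocL /assocR //.
  by rewrite (lab_primeB (Y := B \bullet C) A_module) !lab_primeA (lab_primeB (Y := B) A_module).
by rewrite (lab_primeB (Y := B \bullet C) A_module) (lab_primeB B_module) (lab_primeB AB_module).
Qed.

Lemma lab_assoc_iso u : lab R3 (assoc_iso u) = lab L3 u.
Proof. by rewrite -{2}(reprLK u) -lab_assoc. Qed.

Lemma idxL_assoc_iso u : u \in inL L3 -> idxL R3 (assoc_iso u) = idxL L3 u.
Proof.
case/inL_assocL=> [[a [<- aL]]|[b [<- bL no_a]]|[c [<- cL no_a no_b]]];
  rewrite assoc_isoE /comp /assocL /assocR //.
- have b_unp : unpairedB A b.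
    by apply/(unpairedB_prime A_module) => a ab; apply: (no_a a); rewrite /= ab.
  have b_unpBC : unpairedB A (primeA C b : node (B \bullet C)).
    by apply/unpairedBP => a; rewrite harmonic_primeA_r; apply/unpairedBP.
  rewrite (idxL_primeB b_unpBC) !idxL_primeA lab_primeA (idxL_primeB b_unp).
  move: b_unp; rewrite unpairedB_idx // => b_gt.
  have := idxL_range B_module bL; have := pcount_comp B_module C_module (lab B b).
  have := mcount_min A_module B_module (lab B b); have := mcount_min A_module BC_module (lab B b).
  have := mcount_min B_module C_module (lab B b).
  lia.
have c_unp : unpairedB (A \bullet B) c.
  apply/(unpairedB_prime AB_module) => w; case: (comp_cover w) => [[a <-]|[b <-]] e.
    by apply: (no_a a); rewrite /= e.
  by apply: (no_b b); rewrite /= e.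
have c_unpBC : unpairedB B c.
  by apply/unpairedBP => b; rewrite -harmonic_primeB_l; apply/unpairedBP.
have c_unpABC : unpairedB A (primeB B c : node (B \bullet C)).
  by apply/unpairedBP => a; rewrite -harmonic_primeA_primeB; apply/unpairedBP.
rewrite (idxL_primeB c_unpABC) (idxL_primeB c_unp) (lab_primeB B_module) (idxL_primeB c_unpBC).
move: c_unp; rewrite (unpairedB_idx AB_module) // => c_gt.
have := idxL_range C_module cL.
have := pcount_comp A_module B_module (lab C c); have := qcount_comp A_module B_module (lab C c).
have := pcount_comp B_module C_module (lab C c).
have := mcount_min A_module B_module (lab C c); have := mcount_min B_module C_module (lab C c).
have := mcount_min AB_module C_module (lab C c); have := mcount_min A_module BC_module (lab C c).
lia.
Qed.

Lemma idxR_assoc_iso u : u \in inR L3 -> idxR R3 (assoc_iso u) = idxR L3 u.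
Proof.
case/inR_assocL=> [[c [<- cR]]|[b [<- bR no_c]]|[a [<- aR no_c no_b]]];
  rewrite assoc_isoE /comp /assocL /assocR.
- rewrite (idxR_primeB AB_module C_module cR) (idxR_primeB (Y := B \bullet C) A_module BC_module).
    exact: idxR_primeB.
  by rewrite inR_primeB.
- have b_unpAB : unpairedA C (primeB A b : node (A \bullet B)).
    by apply/(unpairedA_prime (Y := C) AB_module) => c; apply: no_c.
  have b_unp : unpairedA C b.
    by apply/unpairedAP => c; rewrite -harmonic_primeB_l; apply/unpairedAP.
  rewrite (idxR_primeB (Y := B \bullet C) A_module BC_module); last by rewrite inR_primeA.
  rewrite (idxR_primeA AB_module b_unpAB) (lab_primeB (Y := B) A_module).
  rewrite (idxR_primeB A_module B_module bR) (idxR_primeA B_module b_unp).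
  move: b_unp; rewrite unpairedA_idx // => b_gt.
  have := idxR_range B_module bR; have := qcount_comp A_module B_module (lab B b).
  have := mcount_min A_module B_module (lab B b); have := mcount_min B_module C_module (lab B b).
  have := mcount_min AB_module C_module (lab B b).
  lia.
have a_unp : unpairedA B a.
  by apply/(unpairedA_prime (Y := B) A_module) => b ba; apply: (no_b b); rewrite /= ba.
have a_unpAB : unpairedA C (primeA B a : node (A \bullet B)).
  by apply/(unpairedA_prime (Y := C) AB_module) => c; apply: no_c.
have a_unpBC : unpairedA (B \bullet C) a.
  apply/unpairedAP => w; case: (comp_cover w) => [[b <-]|[c <-]].
    by rewrite harmonic_primeA_r; apply/unpairedAP.
  by rewrite -harmonic_primeA_primeB; apply/unpairedAP.
have aR_AB : primeA B a \in inR (A \bullet B) by rewrite inR_primeA.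
move: (a_unpAB); rewrite (unpairedA_idx AB_module) // (idxR_primeA A_module a_unp) => a_gtAB.
rewrite (idxR_primeA A_module a_unpBC) (idxR_primeA AB_module a_unpAB) !lab_primeA.
rewrite (idxR_primeA A_module a_unp).
move: a_unp; rewrite unpairedA_idx // => a_gt.
have := idxR_range A_module aR.
have := qcount_comp A_module B_module (lab A a); have := qcount_comp B_module C_module (lab A a).
have := pcount_comp B_module C_module (lab A a).
have := mcount_min A_module B_module (lab A a); have := mcount_min B_module C_module (lab A a).
have := mcount_min AB_module C_module (lab A a); have := mcount_min A_module BC_module (lab A a).
lia.
Qed.

End Associativity.

Theorem mainTheorem1 (Sig : finType) (A B C : premodule Sig) :
  is_module A -> is_module B -> is_module C ->
  module_iso ((A \bullet B) \bullet C) (A \bullet (B \bullet C)).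
Proof.
move=> A_module B_module C_module.
exists (@assoc_iso _ A B C); split; first exact: assoc_iso_bij.
split; first exact: edge_assoc_iso.
split; first exact: inL_assoc_iso.
split; first exact: inR_assoc_iso.
split=> u u_in; split; try exact: lab_assoc_iso.
  exact: idxL_assoc_iso.
exact: idxR_assoc_iso.
Qed.
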